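(* Let $d>1$ and $n\ge d$ be integers. For every $A\subseteq\mathbb{F}_2^n$, \[\lambda^*(n,d,2^{d-1},A)\le 1-\frac{\binom{n-1}{d}_2}{\binom{n}{d}_2}.\] Moreover, equality holds when $A=\{x\in\mathbb{F}_2^n:\sum_{i=1}^n x_i=0\}$, and consequently $\lambda^*(d,2^{d-1})=1-2^{-d}$.
   Context: For integers $n\ge d\ge 1$, a $d$-flat in $\mathbb{F}_2^n$ is a set $x_0+U$ with $x_0\in\mathbb{F}_2^n$ and $U$ a $d$-dimensional linear subspace of $\mathbb{F}_2^n$. For $A\subseteq\mathbb{F}_2^n$ and an integer $0\le s\le 2^d$, $\lambda^*(n,d,s,A)$ denotes the fraction of $d$-flats $Q$ in $\mathbb{F}_2^n$ with $|Q\cap A|=s$. Let $\lambda^*(n,d,s)=\max_{A}\lambda^*(n,d,s,A)$ and $\lambda^*(d,s)=\lim_{n\to\infty}\lambda^*(n,d,s)$. The Gaussian binomial coefficient is $\binom{n}{d}_2=\prod_{i=0}^{d-1}\frac{2^{n-i}-1}{2^{d-i}-1}$, the number of $d$-dimensional linear subspaces of $\mathbb{F}_2^n$. *)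

From HB Require Import structures.
From mathcomp Require Import all_boot all_order all_algebra all_fingroup.
Set Implicit Arguments. Unset Strict Implicit. Unset Printing Implicit Defensive.
Import Order.TTheory GRing.Theory Num.Theory.
Local Open Scope ring_scope.

Notation vec n := ('rV['F_2]_n) (only parsing).

(* Q is a d-flat: Q = x0 + U with U a d-dimensional linear subspace, where U
   is presented as the row space of a d x n matrix of rank d. *)
Definition is_flat (n d : nat) (Q : {set 'rV['F_2]_n}) : bool :=
  [exists x0 : 'rV['F_2]_n, exists B : 'M['F_2]_(d, n),
     (\rank B == d) && (Q == [set x0 + v | v in [set v : 'rV['F_2]_n | (v <= B)%MS]])].

Definition flats (n d : nat) : {set {set 'rV['F_2]_n}} :=
  [set Q | is_flat d Q].

Definition lam (n d s : nat) (A : {set 'rV['F_2]_n}) : rat :=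
  (#|[set Q in flats n d | #|Q :&: A| == s]|)%:R / (#|flats n d|)%:R.

Definition lamstar (n d s : nat) : rat :=
  \big[Num.max/0]_(A : {set 'rV['F_2]_n}) lam d s A.

Definition lamstar_limit (d s : nat) (L : rat) : Prop :=
  forall eps : rat, 0 < eps ->
    exists N : nat, forall n : nat, (N <= n)%N -> `|lamstar n d s - L| < eps.

Definition gbin (n d : nat) : rat :=
  \prod_(i < d) ((2 ^+ (n - i) - 1) / (2 ^+ (d - i) - 1)).

Definition parity_set (n : nat) : {set 'rV['F_2]_n} :=
  [set x : 'rV['F_2]_n | \sum_(i < n) x ord0 i == 0].

From HB Require Import structures.
From mathcomp Require Import all_boot all_order all_algebra all_fingroup.
From mathcomp Require Import zify ring lra.
Set Implicit Arguments. Unset Strict Implicit. Unset Printing Implicit Defensive.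
Import Order.TTheory GRing.Theory Num.Theory.
Local Open Scope ring_scope.

(* Double counting.  The affine group acts transitively on pairs of distinct
   points, so every such pair lies in the same number K of d-flats.  Counting
   pairs inside flats gives |F| 2^d (2^d - 1) = K 2^n (2^n - 1), and counting
   pairs (x, y) with x in A, y outside A gives
   sum_Q |Q & A| |Q \ A| = K |A| |~A| <= K 4^(n-1).  A flat met by A in exactly
   2^(d-1) points contributes 4^(d-1) on the left, which bounds their number.
   For the parity set both steps are equalities: |A| = |~A|, and a flat not
   split evenly lies on one side of the hyperplane.  Finally the Gaussian
   binomial ratio telescopes to (2^(n-d) - 1) / (2^n - 1). *)

Lemma F2_neq0_eq1 (a : 'F_2) : a != 0 -> a = 1.
Proof. by case: a => [[|[|//]]] //= ? _; apply/val_inj. Qed.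

Lemma unitmx1_F2 (c : 'M['F_2]_1) : c \in unitmx -> c = 1%:M.
Proof.
rewrite unitmxE unitfE det_mx11 => /F2_neq0_eq1 c1.
by rewrite [c]mx11_scalar c1.
Qed.

Lemma rV_F2_nz_pid_unit n (u : 'rV['F_2]_n) : u != 0 ->
  exists2 P : 'M['F_2]_n, P \in unitmx & u = pid_mx 1 *m P.
Proof.
move=> u_nz; exists (row_ebase u); first exact: row_ebase_unit.
have := mulmx_ebase u; rewrite rank_rV u_nz /= => {1}<-.
by rewrite (unitmx1_F2 (col_ebase_unit u)) mul1mx.
Qed.

Lemma unitmx_F2_transitive n (u v : 'rV['F_2]_n) : u != 0 -> v != 0 ->
  exists2 M : 'M['F_2]_n, M \in unitmx & u *m M = v.
Proof.
move=> /rV_F2_nz_pid_unit [P uP ->] /rV_F2_nz_pid_unit [P' uP' ->].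
exists (invmx P *m P'); first by rewrite unitmx_mul unitmx_inv uP.
by rewrite -mulmxA (mulmxA P) mulmxV // mul1mx.
Qed.

Section Flats.
Variables n d : nat.
Local Notation V := 'rV['F_2]_n.

Lemma card_row_span (B : 'M['F_2]_(d, n)) : \rank B = d ->
  #|[set v : V | (v <= B)%MS]| = (2 ^ d)%N.
Proof.
move=> rB; have freeB : row_free B by rewrite /row_free rB.
have -> : [set v : V | (v <= B)%MS] = [set w *m B | w in [set: 'rV['F_2]_d]].
  by apply/setP => v; rewrite inE; apply/submxP/imsetP => -[w]; exists w.
by rewrite card_imset ?cardsT ?card_mx ?card_Fp ?mul1n //; apply: row_free_inj.
Qed.

Lemma card_flat (Q : {set V}) : Q \in flats n d -> #|Q| = (2 ^ d)%N.
Proof.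
rewrite inE => /existsP [x0 /existsP [B /andP [/eqP rB /eqP ->]]].
by rewrite card_imset ?card_row_span //; apply: addrI.
Qed.

Lemma flats_gt0 : (d <= n)%N -> (0 < #|flats n d|)%N.
Proof.
move=> le_dn; apply/card_gt0P.
exists [set 0 + v | v in [set v : V | (v <= (pid_mx d : 'M['F_2]_(d, n)))%MS]].
rewrite inE; apply/existsP; exists 0; apply/existsP; exists (pid_mx d).
by rewrite rank_pid_mx ?eqxx.
Qed.

Lemma flat_affine_image (M : 'M['F_2]_n) (b : V) (Q : {set V}) :
  M \in unitmx -> Q \in flats n d -> [set x *m M + b | x in Q] \in flats n d.
Proof.
move=> uM; rewrite !inE => /existsP [x0 /existsP [B /andP [rB /eqP ->]]].
apply/existsP; exists (x0 *m M + b); apply/existsP; exists (B *m M).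
rewrite mxrankMfree ?row_free_unit // rB; apply/eqP/setP => z.
apply/imsetP/imsetP => -[x].
- case/imsetP=> v; rewrite inE => vB -> ->.
  by exists (v *m M); rewrite ?inE ?submxMr // mulmxDl addrAC.
- rewrite inE => xBM ->; exists (x0 + x *m invmx M).
    apply/imsetP; exists (x *m invmx M) => //.
    by rewrite inE -(mulmxK uM B) submxMr.
  by rewrite mulmxDl mulmxKV // addrAC.
Qed.

Definition flats_through (x y : V) := [set Q in flats n d | (x \in Q) && (y \in Q)].

Lemma card_flats_through_affine (M : 'M['F_2]_n) (b x y : V) : M \in unitmx ->
  (#|flats_through x y| <= #|flats_through (x *m M + b) (y *m M + b)|)%N.
Proof.
move=> uM; have inj_f : injective (fun x : V => x *m M + b).
  by move=> u v /addIr; apply: row_free_inj; rewrite row_free_unit.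
rewrite -(card_imset _ (imset_inj inj_f)); apply/subset_leq_card/subsetP.
move=> Q0 /imsetP [Q]; rewrite in_set => /and3P [flatQ xQ yQ] ->.
by rewrite in_set flat_affine_image //= !(imset_f (fun z : V => z *m M + b)).
Qed.

Lemma card_flats_through_const (x y x' y' : V) : x != y -> x' != y' ->
  #|flats_through x y| = #|flats_through x' y'|.
Proof.
suff le_through a b a' b' : a != b -> a' != b' ->
    (#|flats_through a b| <= #|flats_through a' b'|)%N.
  by move=> ? ?; apply/eqP; rewrite eqn_leq !le_through.
move=> neq_ab neq_ab'.
have [M uM eM] : exists2 M, M \in unitmx & (b - a) *m M = b' - a'.
  by apply: unitmx_F2_transitive; rewrite subr_eq0 eq_sym.
have := card_flats_through_affine (a' - a *m M) a b uM.
rewrite [a *m M + _]addrC subrK -[b](subrK a) mulmxDl eM.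
by rewrite addrACA subrr addr0 !subrK.
Qed.

End Flats.

Section PairCounting.
Variable T : finType.
Implicit Types S A : {set T}.

Lemma sum_mem_card S : (\sum_x ((x \in S) : nat))%N = #|S|.
Proof. by rewrite -sum1_card [RHS]big_mkcond; apply: eq_bigr => x _; case: (x \in S). Qed.

Lemma sum_pairs_neq S :
  (\sum_x \sum_y [&& x \in S, y \in S & x != y] = #|S| * (#|S| - 1))%N.
Proof.
rewrite -{1}[#|S|]sum_mem_card big_distrl; apply: eq_bigr => x _ /=.
case xS: (x \in S); last by rewrite big1.
rewrite mul1n (cardsD1 x S) xS add1n subn1 /= -sum_mem_card.
by apply: eq_bigr => y _; rewrite !inE andbC eq_sym.
Qed.

Lemma sum_pairs_cut S A :
  (\sum_x \sum_y [&& x \in S, y \in S, x \in A & y \notin A]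
    = #|S :&: A| * #|S :\: A|)%N.
Proof.
rewrite -!sum_mem_card big_distrl; apply: eq_bigr => x _ /=.
rewrite big_distrr; apply: eq_bigr => y _ /=.
by rewrite !inE; case: (x \in S); case: (y \in S); case: (x \in A); case: (y \in A).
Qed.

End PairCounting.

Lemma sum_flats_pairs n d (P : rel 'rV['F_2]_n) (x0 y0 : 'rV['F_2]_n) :
  (forall x y, P x y -> x != y) -> x0 != y0 ->
  (\sum_(Q in flats n d) \sum_x \sum_y [&& x \in Q, y \in Q & P x y]
   = #|flats_through d x0 y0| * \sum_x \sum_y P x y)%N.
Proof.
move=> P_neq neq_xy0; rewrite exchange_big big_distrr; apply: eq_bigr => x _ /=.
rewrite exchange_big big_distrr; apply: eq_bigr => y _ /=.
case Pxy: (P x y); last by rewrite muln0 big1 // => Q _; rewrite !andbF.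
rewrite muln1 -(card_flats_through_const d (P_neq _ _ Pxy) neq_xy0).
rewrite -sum1_card big_mkcond [RHS]big_mkcond; apply: eq_bigr => Q _ /=.
by rewrite !inE andbT; case: (is_flat d Q); case: (x \in Q); case: (y \in Q).
Qed.

Lemma expn2_pred m : (0 < m)%N -> (2 ^ m = 2 * 2 ^ m.-1)%N.
Proof. by case: m => // m _; rewrite expnS. Qed.

Lemma exp2_sub1_gt0 m : (0 < m)%N -> (0 < 2 ^ m - 1)%N.
Proof. by move=> m_gt0; rewrite subn_gt0 -{1}(expn0 2) ltn_exp2l. Qed.

Section Parity.
Variable n : nat.
Local Notation V := 'rV['F_2]_n.
Local Notation H := (parity_set n).

Definition coord_sum (x : V) : 'F_2 := \sum_(i < n) x ord0 i.

Lemma coord_sumD x y : coord_sum (x + y) = coord_sum x + coord_sum y.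
Proof. by rewrite -big_split; apply: eq_bigr => i _; rewrite mxE. Qed.

Lemma coord_sum0 : coord_sum 0 = 0.
Proof. by rewrite /coord_sum big1 // => i _; rewrite mxE. Qed.

Lemma in_parity_set x : (x \in H) = (coord_sum x == 0).
Proof. by rewrite inE. Qed.

Lemma coord_sum_neq0_exists : (0 < n)%N -> exists u : V, coord_sum u != 0.
Proof.
move=> n_gt0; exists (delta_mx 0 (Ordinal n_gt0)).
rewrite /coord_sum (bigD1 (Ordinal n_gt0)) //= big1 ?addr0 ?mxE ?eqxx // => i /negbTE ni.
by rewrite mxE eq_sym ni andbF.
Qed.

Lemma card_parity_halves (S : {set V}) (u : V) : coord_sum u != 0 ->
  (forall z, z \in S -> z + u \in S) -> #|S :&: H| = #|S :\: H|.
Proof.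
move=> /F2_neq0_eq1 u1 S_u; have inj_u : injective (+%R^~ u : V -> V) by apply: addIr.
have Hu z : (z + u \in H) = (z \notin H).
  by rewrite !in_parity_set coord_sumD u1; case: (coord_sum z) => [[|[|//]]].
have le_image (B B' : {set V}) : (forall z, z \in S :&: B -> z + u \in S :&: B') ->
    (#|S :&: B| <= #|S :&: B'|)%N.
  move=> BB'; rewrite -(card_imset _ inj_u); apply/subset_leq_card/subsetP.
  by move=> _ /imsetP [z /BB' zB' ->].
apply/eqP; rewrite setDE eqn_leq !le_image // => z; rewrite !(in_setI, in_setC) Hu ?negbK.
- by case/andP=> /S_u -> ->.
- by case/andP=> /S_u -> ->.
Qed.

Lemma card_parity_set : (0 < n)%N -> #|H| = (2 ^ n.-1)%N /\ #|~: H| = (2 ^ n.-1)%N.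
Proof.
move=> n_gt0; have [u u_nz] := coord_sum_neq0_exists n_gt0.
have := card_parity_halves u_nz (fun z _ => in_setT (z + u)).
rewrite setTI setTD => eqHC; have := cardsC H.
by rewrite card_mx card_Fp // mul1n eqHC (expn2_pred n_gt0); split; lia.
Qed.

Lemma flat_parity_split d (Q : {set V}) : (0 < d)%N -> Q \in flats n d ->
  #|Q :&: H| = (2 ^ d.-1)%N \/ (#|Q :&: H| * #|Q :\: H| = 0)%N.
Proof.
move=> d_gt0 flatQ; have cardQ := card_flat flatQ.
move: flatQ; rewrite inE => /existsP [x0 /existsP [B /andP [_ /eqP eQ]]].
case: (boolP [exists u in [set v : V | (v <= B)%MS], coord_sum u != 0]).
- case/existsP=> u /andP [uB u_nz]; left.
  have Q_u z : z \in Q -> z + u \in Q.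
    rewrite eQ => /imsetP [v vB ->]; apply/imsetP; exists (v + u); rewrite ?addrA //.
    by move: vB uB; rewrite !inE; apply: addmx_sub.
  have := cardsID H Q; rewrite -(card_parity_halves u_nz Q_u) cardQ (expn2_pred d_gt0).
  lia.
- rewrite negb_exists => /forallP all0; right.
  have Q_const z : z \in Q -> coord_sum z = coord_sum x0.
    rewrite eQ => /imsetP [v vB ->]; rewrite coord_sumD.
    by have := all0 v; rewrite vB negbK => /eqP ->; rewrite addr0.
  apply/eqP; rewrite muln_eq0 !cards_eq0; apply/orP.
  case: (boolP (coord_sum x0 == 0)) => x0H; [right | left];
    apply/eqP/setP => z; rewrite !(in_setI, in_setD, in_set0) in_parity_set;
    by case zQ: (z \in Q); rewrite ?andbF // Q_const // ?x0H // (negbTE x0H).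
Qed.

End Parity.

Lemma leq_mul_half_sum (a b c : nat) : (a + b = 2 * c -> a * b <= c * c)%N.
Proof.
wlog le_ab : a b / (a <= b)%N.
  by move=> ab_sym; case: (leqP a b) => [/ab_sym //|/ltnW /ab_sym]; rewrite (mulnC a) (addnC a).
have [t ->] : exists t, b = (a + t)%N by exists (b - a)%N; lia.
by move=> sum_ab; nia.
Qed.

(* Applied with [D = 2 ^ d.-1], [N = 2 ^ n.-1] and [X = 2 ^ (n - d)]. *)
Lemma pair_count_rescale (F K X D N : nat) : N = (X * D)%N -> (0 < D)%N ->
  (F * (2 * D * (2 * D - 1)) = K * (2 * N * (2 * N - 1)))%N ->
  (K * (N * N) * (2 * N - 1) = F * (X * (2 * D - 1)) * (D * D))%N.
Proof.
move=> eN D_gt0 pairs; apply/eqP; rewrite -(eqn_pmul2r (isT : 0 < 2)%N).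
have -> : (K * (N * N) * (2 * N - 1) * 2 = K * (2 * N * (2 * N - 1)) * N)%N by ring.
by rewrite -pairs eN; apply/eqP; ring.
Qed.

Section HalvedFlats.
Variables n d : nat.
Hypotheses (d_gt1 : (1 < d)%N) (le_dn : (d <= n)%N).
Local Notation V := 'rV['F_2]_n.
Local Notation F := (flats n d).
Local Notation H := (parity_set n).
Local Notation halved A := [set Q in F | #|Q :&: A| == (2 ^ d.-1)%N].

Let n_gt0 : (0 < n)%N. Proof. lia. Qed.
Let u := xchoose (coord_sum_neq0_exists n_gt0).
Let u_neq0 : (0 : V) != u.
Proof.
apply/eqP => u0; have := xchooseP (coord_sum_neq0_exists n_gt0).
by rewrite -/u -u0 coord_sum0 eqxx.
Qed.
Let K := #|flats_through d 0 u|.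

Lemma card_flats_pairs :
  (#|F| * (2 ^ d * (2 ^ d - 1)) = K * (2 ^ n * (2 ^ n - 1)))%N.
Proof.
have := sum_flats_pairs d (P := fun x y => x != y) (fun _ _ neq_xy => neq_xy) u_neq0.
have := sum_pairs_neq [set: V]; rewrite cardsT card_mx card_Fp // mul1n.
under eq_bigr => x _ do under eq_bigr => y _ do rewrite !in_setT.
move=> -> <-; rewrite -sum_nat_const; apply: eq_bigr => Q flatQ.
by rewrite sum_pairs_neq (card_flat flatQ).
Qed.

Lemma sum_flats_cut (A : {set V}) :
  (\sum_(Q in F) #|Q :&: A| * #|Q :\: A| = K * (#|A| * #|~: A|))%N.
Proof.
have A_neq (x y : V) : (x \in A) && (y \notin A) -> x != y.
  by case/andP=> xA; apply: contraNneq => <-.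
have := sum_flats_pairs d (P := fun x y => (x \in A) && (y \notin A)) A_neq u_neq0.
have := sum_pairs_cut [set: V] A; rewrite setTI setTD.
under eq_bigr => x _ do under eq_bigr => y _ do rewrite !in_setT.
by move=> -> <-; apply: eq_bigr => Q _; rewrite sum_pairs_cut.
Qed.

Lemma card_flat_cut_halved (A Q : {set V}) : Q \in F ->
  #|Q :&: A| = (2 ^ d.-1)%N -> (#|Q :&: A| * #|Q :\: A| = 2 ^ d.-1 * 2 ^ d.-1)%N.
Proof.
move=> flatQ QA; rewrite QA; congr (_ * _).
by have := cardsID A Q; rewrite (card_flat flatQ) QA (expn2_pred (ltnW d_gt1)); lia.
Qed.

Lemma card_halved_le (A : {set V}) :
  (#|halved A| * (2 ^ d.-1 * 2 ^ d.-1) <= \sum_(Q in F) #|Q :&: A| * #|Q :\: A|)%N.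
Proof.
rewrite -sum1_card big_distrl big_mkcond [leqRHS]big_mkcond /= leq_sum // => Q _.
rewrite in_set; case flatQ: (Q \in F) => //=.
by case: eqP => [/(card_flat_cut_halved flatQ) ->|]; rewrite ?mul1n.
Qed.

Lemma card_halved_parity :
  (#|halved H| * (2 ^ d.-1 * 2 ^ d.-1) = \sum_(Q in F) #|Q :&: H| * #|Q :\: H|)%N.
Proof.
rewrite -sum1_card big_distrl big_mkcond [RHS]big_mkcond /=; apply: eq_bigr => Q _.
rewrite in_set; case flatQ: (Q \in F) => //=.
case: eqP => [/(card_flat_cut_halved flatQ) ->|QH]; rewrite ?mul1n //.
by have [//|->] := flat_parity_split (ltnW d_gt1) flatQ.
Qed.

Lemma card_flats_rescaled :
  (K * (2 ^ n.-1 * 2 ^ n.-1) * (2 ^ n - 1)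
   = #|F| * (2 ^ (n - d) * (2 ^ d - 1)) * (2 ^ d.-1 * 2 ^ d.-1))%N.
Proof.
have eN : (2 ^ n.-1 = 2 ^ (n - d) * 2 ^ d.-1)%N by rewrite -expnD; congr (2 ^ _)%N; lia.
have := card_flats_pairs; rewrite (expn2_pred n_gt0) (expn2_pred (ltnW d_gt1)).
exact: pair_count_rescale eN (expn_gt0 _ _).
Qed.

Lemma card_halved_le_bound (A : {set V}) :
  (#|halved A| * (2 ^ n - 1) <= #|F| * (2 ^ (n - d) * (2 ^ d - 1)))%N.
Proof.
rewrite -(@leq_pmul2r (2 ^ d.-1 * 2 ^ d.-1)) ?muln_gt0 ?expn_gt0 //.
rewrite -card_flats_rescaled mulnAC leq_mul2r; apply/orP; right.
apply: leq_trans (card_halved_le A) _; rewrite sum_flats_cut leq_mul2l; apply/orP; right.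
by apply: leq_mul_half_sum; rewrite cardsC card_mx card_Fp // mul1n expn2_pred.
Qed.

Lemma card_halved_parity_eq_bound :
  (#|halved H| * (2 ^ n - 1) = #|F| * (2 ^ (n - d) * (2 ^ d - 1)))%N.
Proof.
apply/eqP; rewrite -(@eqn_pmul2r (2 ^ d.-1 * 2 ^ d.-1)) ?muln_gt0 ?expn_gt0 //.
rewrite -card_flats_rescaled mulnAC card_halved_parity sum_flats_cut.
by have [-> ->] := card_parity_set n_gt0.
Qed.

End HalvedFlats.

Lemma natr_exp2_sub1 (R : numDomainType) k : ((2 ^ k - 1)%N%:R : R) = 2 ^+ k - 1.
Proof. by rewrite natrB ?expn_gt0 // natrX. Qed.

Lemma exp2_sub1_neq0 (R : numDomainType) k : (0 < k)%N -> (2 : R) ^+ k - 1 != 0.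
Proof.
by move=> k_gt0; rewrite -natr_exp2_sub1 pnatr_eq0 -lt0n exp2_sub1_gt0.
Qed.

Definition halved_density (n d : nat) : rat :=
  (2 ^ (n - d) * (2 ^ d - 1))%N%:R / (2 ^ n - 1)%N%:R.

Lemma halved_densityE n d : (d <= n)%N ->
  halved_density n d = 2 ^+ (n - d) * (2 ^+ d - 1) / (2 ^+ (n - d) * 2 ^+ d - 1).
Proof. by move=> le_dn; rewrite /halved_density natrM !natr_exp2_sub1 natrX -exprD subnK. Qed.

Lemma gbin_pred_ratio n d : (0 < d)%N -> (d <= n)%N ->
  gbin n.-1 d / gbin n d = (2 ^+ (n - d) - 1) / (2 ^+ n - 1).
Proof.
move=> d_gt0 le_dn; pose f k : rat := 2 ^+ (n - k) - 1.
have f_neq0 k : (k < n)%N -> f k != 0 by move=> lt_kn; apply: exp2_sub1_neq0; lia.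
transitivity (\prod_(0 <= k < d) (f k.+1 / f k)).
  rewrite /gbin -prodf_div big_mkord; apply: eq_bigr => i _.
  have lt_in : (i < n)%N := leq_trans (ltn_ord i) le_dn.
  have -> : (n.-1 - i = n - i.+1)%N by lia.
  by rewrite /f; field; rewrite !exp2_sub1_neq0 ?subn_gt0.
rewrite telescope_prodf // => [|k /andP [_ lt_kd]]; last by apply: f_neq0; lia.
by rewrite /f subn0.
Qed.

Lemma one_sub_gbin_ratio n d : (0 < d)%N -> (d <= n)%N ->
  1 - gbin n.-1 d / gbin n d = halved_density n d.
Proof.
move=> d_gt0 le_dn; rewrite gbin_pred_ratio // halved_densityE //.
have -> : (2 : rat) ^+ n = 2 ^+ (n - d) * 2 ^+ d by rewrite -exprD subnK.
by field; rewrite -exprD subnK // exp2_sub1_neq0 //; lia.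
Qed.

Lemma ler_ratio_nat (R : numFieldType) (a b c e : nat) : (0 < e)%N ->
  (a * e <= b * c)%N -> (a%:R / b%:R : R) <= c%:R / e%:R.
Proof.
move=> e_gt0 le_ae_bc; have [->|b_gt0] := posnP b.
  by rewrite invr0 mulr0 divr_ge0 ?ler0n.
rewrite ler_pdivrMr ?ltr0n // mulrAC ler_pdivlMr ?ltr0n //.
by rewrite -!natrM ler_nat (mulnC c).
Qed.

Lemma eq_ratio_nat (R : numFieldType) (a b c e : nat) : (0 < b)%N -> (0 < e)%N ->
  (a * e = b * c)%N -> (a%:R / b%:R : R) = c%:R / e%:R.
Proof.
move=> b_gt0 e_gt0 eq_ae_bc; apply/eqP.
by rewrite eqr_div ?pnatr_eq0 -?lt0n // -!natrM eq_ae_bc mulnC.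
Qed.

Section Density.
Variables n d : nat.
Hypotheses (d_gt1 : (1 < d)%N) (le_dn : (d <= n)%N).

Lemma lam_le_halved_density (A : {set 'rV['F_2]_n}) :
  lam d (2 ^ d.-1) A <= halved_density n d.
Proof. by apply: ler_ratio_nat; [apply: exp2_sub1_gt0; lia | apply: card_halved_le_bound]. Qed.

Lemma lam_parity_set : lam d (2 ^ d.-1) (parity_set n) = halved_density n d.
Proof.
apply: eq_ratio_nat; [exact: flats_gt0 | apply: exp2_sub1_gt0; lia |].
exact: card_halved_parity_eq_bound.
Qed.

Lemma lamstar_halved : lamstar n d (2 ^ d.-1) = halved_density n d.
Proof.
apply/eqP; rewrite eq_le; apply/andP; split.
  apply: (big_ind (fun x => x <= halved_density n d)) => [|x y|A _].
  - by rewrite divr_ge0 ?ler0n.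
  - by rewrite ge_max => -> ->.
  - exact: lam_le_halved_density.
by rewrite /lamstar (bigD1 (parity_set n)) //= le_max lam_parity_set lexx.
Qed.

Lemma halved_density_dist :
  `|halved_density n d - (1 - 2%:R ^- d)| <= ((2 ^ n - 1)%N%:R)^-1.
Proof.
have -> : ((2 ^ n - 1)%N%:R : rat) = 2 ^+ (n - d) * 2 ^+ d - 1.
  by rewrite natr_exp2_sub1 -exprD subnK.
rewrite halved_densityE //.
set X : rat := 2 ^+ (n - d); set Y : rat := 2 ^+ d.
have Y_gt1 : 1 < Y by rewrite /Y -natrX ltr1n -{1}(expn0 2) ltn_exp2l //; lia.
have Y_gt0 : 0 < Y := lt_trans ltr01 Y_gt1.
have XY_gt1 : 1 < X * Y.
  by rewrite /X /Y -exprD -natrX ltr1n -{1}(expn0 2) ltn_exp2l //; lia.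
have -> : X * (Y - 1) / (X * Y - 1) - (1 - 2%:R ^- d) = (1 - Y^-1) / (X * Y - 1).
  by rewrite /Y; field; rewrite -/Y subr_eq0 !gt_eqF.
rewrite ger0_norm; last by rewrite divr_ge0 ?subr_ge0 ?invf_le1 ?ltW.
by rewrite ler_pdivrMr ?subr_gt0 // mulVf ?gt_eqF ?subr_gt0 // gerBl invr_ge0 ltW.
Qed.

End Density.

Lemma lamstar_limit_halved d : (1 < d)%N -> lamstar_limit d (2 ^ d.-1) (1 - 2%:R ^- d).
Proof.
move=> d_gt1 eps eps_gt0; have inv_ge0 : 0 <= eps^-1 by rewrite invr_ge0 ltW.
exists (Num.bound eps^-1 + d)%N => n le_Nn; have le_dn : (d <= n)%N by lia.
rewrite lamstar_halved //; apply: le_lt_trans (halved_density_dist d_gt1 le_dn) _.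
rewrite -[eps]invrK ltf_pV2 ?posrE ?invr_gt0 ?ltr0n ?exp2_sub1_gt0 //; last lia.
apply: lt_le_trans (archi_boundP inv_ge0) _; rewrite ler_nat.
by have := ltn_expl n (isT : (1 < 2)%N); lia.
Qed.

Unset Implicit Arguments.
Theorem lemma3p1 (d n : nat) (hd : (1 < d)%N) (hn : (d <= n)%N) :
  (forall A : {set 'rV['F_2]_n},
      lam d (2 ^ d.-1) A <= 1 - gbin n.-1 d / gbin n d)
  /\ lam d (2 ^ d.-1) (parity_set n) = 1 - gbin n.-1 d / gbin n d
  /\ lamstar_limit d (2 ^ d.-1) (1 - 2%:R ^- d).
Proof.
rewrite one_sub_gbin_ratio //; last exact: ltnW.
split; first exact: lam_le_halved_density.
split; first exact: lam_parity_set.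
exact: lamstar_limit_halved.
Qed.
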